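(* For $\lambda,\mu\in\mathfrak a^*_{\mathbb C}$ let $d_{\lambda,\mu}:G\to\mathbb C$, $d_{\lambda,\mu}(g)=e^{(i\lambda+\rho)H(g)}e^{(i\mu+\rho)H(gw)}$. Then for all $\gamma,g\in G$, $$d_{\lambda,\mu}(\gamma g)=e^{(i\lambda+\rho)\langle\gamma\cdot o,\,\gamma g\cdot eM\rangle}\,e^{(i\mu+\rho)\langle\gamma\cdot o,\,\gamma g\cdot wM\rangle}\,d_{\lambda,\mu}(g).$$
   Context: $G$ is a connected noncompact real semisimple Lie group with finite center, $K$ maximal compact, $X=G/K$, $o=eK$; Iwasawa decomposition $g=k(g)\exp(H(g))n(g)$ with $H(g)\in\mathfrak a$; $M=Z_K(A)$, $M'=N_K(A)$, and $w\in M'$ a representative of the longest Weyl group element; $B=K/M$ with $G$-action $g\cdot kM=k(gk)M$; $\rho$ half the sum of positive restricted roots with multiplicities; horocycle bracket $\langle gK,kM\rangle=-H(g^{-1}k)\in\mathfrak a$; expressions like $(i\lambda+\rho)H(g)$ mean $(i\lambda+\rho)(H(g))$. *)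

From HB Require Import structures.
From mathcomp Require Import all_boot all_order all_algebra.
From mathcomp Require Import monoid.
From mathcomp Require Import all_classical all_reals all_analysis.
From mathcomp Require Import complex.

Set Implicit Arguments.
Unset Strict Implicit.
Unset Printing Implicit Defensive.

Import Order.TTheory GRing.Theory Num.Theory.
Local Open Scope ring_scope.

Local Open Scope complex_scope.
Definition cexp (R : realType) (z : R[i]) : R[i] :=
  (expR (complex.Re z))%:C *
  ((cos (complex.Im z))%:C + 'i * (sin (complex.Im z))%:C).

(* an element of a_C^* = Hom_R(a, C), given by its real and imaginary parts *)
Definition cdual (R : realType) (V : lmodType R) : Type :=
  ({linear V -> R^o} * {linear V -> R^o})%type.

Definition cdual_ev (R : realType) (V : lmodType R) (l : cdual V) (x : V)
  : R[i] := (l.1 x) +i* (l.2 x).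

Definition ilam_rho (R : realType) (V : lmodType R) (l : cdual V)
  (rho : {linear V -> R^o}) (x : V) : R[i] :=
  'i * cdual_ev l x + (rho x)%:C.

Section Iwasawa.
Local Open Scope group_scope.
Variables (R : realType) (G : groupType) (a : lmodType R).

Definition is_subgroup (S : G -> Prop) : Prop :=
  [/\ S 1, (forall x y, S x -> S y -> S (x * y)) & (forall x, S x -> S x^-1)].

(* Abstract Iwasawa decomposition G = K exp(a) N, with projections
   kI (= k(g)), HI (= H(g)), nI (= n(g)). *)
Definition iwasawa (K N : G -> Prop) (expA : a -> G)
  (kI : G -> G) (HI : G -> a) (nI : G -> G) : Prop :=
  [/\ is_subgroup K /\ is_subgroup N,
      (forall x y : a, expA (x + y)%R = expA x * expA y) /\ injective expA,
      (forall (x : a) n, N n -> N (expA x * n * (expA x)^-1)),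
      (forall g, [/\ K (kI g), N (nI g) & g = kI g * expA (HI g) * nI g]) &
      (forall k (h : a) n, K k -> N n ->
         [/\ kI (k * expA h * n) = k, HI (k * expA h * n) = h
           & nI (k * expA h * n) = n])].

Definition in_normalizer_KA (K : G -> Prop) (expA : a -> G) (w : G) : Prop :=
  K w /\ (forall x : a, exists y : a, w * expA x * w^-1 = expA y).

(* action of G on B = K/M, on representatives: g . kM = k(gk) M *)
Definition actB (kI : G -> G) (g k : G) : G := kI (g * k).

(* horocycle bracket <gK, kM> = - H(g^-1 k) *)
Definition bracket (HI : G -> a) (g k : G) : a := (- HI (g^-1 * k)%g)%R.

End Iwasawa.

Definition d_lm (R : realType) (G : groupType) (a : lmodType R)
  (HI : G -> a) (w : G) (rho : {linear a -> R^o}) (l m : cdual a) (g : G)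
  : R[i] :=
  cexp (ilam_rho l rho (HI g)) * cexp (ilam_rho m rho (HI (g * w)%g)).

(** Writing [gamma g = k exp(H) n] with [k = k(gamma g)] and [H = H(gamma g)]
    gives [g = (gamma^-1 k) exp(H) n]. Right multiplication by [exp(H) n]
    shifts the Iwasawa [a]-projection by [H], because [exp(a)] normalises [N];
    hence [H(g) = H(gamma^-1 k) + H(gamma g)], i.e. [H(gamma g)] is [H(g)] plus
    the horocycle bracket [<gamma o, gamma g . eM>]. Applied to [g] and to
    [g w], and pushed through the additive maps [i lambda + rho] and the
    exponential, this cocycle identity gives the two factors. *)

From HB Require Import structures.
From mathcomp Require Import all_boot all_order all_algebra.
From mathcomp Require Import monoid.
From mathcomp Require Import all_classical all_reals all_analysis.
From mathcomp Require Import complex.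
From mathcomp Require Import ring.

Set Implicit Arguments.
Unset Strict Implicit.
Unset Printing Implicit Defensive.

Import Order.TTheory GRing.Theory Num.Theory.
Local Open Scope ring_scope.

Lemma cexpD (R : realType) (x y : R[i]) : cexp (x + y) = cexp x * cexp y.
Proof.
case: x => a b; case: y => c d; rewrite /cexp /= expRD cosD sinD.
by congr (_ +i* _)%C; ring.
Qed.

Lemma ilam_rhoD (R : realType) (V : lmodType R) (l : cdual V)
    (rho : {linear V -> R^o}) (x y : V) :
  ilam_rho l rho (x + y) = ilam_rho l rho x + ilam_rho l rho y.
Proof.
rewrite /ilam_rho /cdual_ev !linearD /= rmorphD /=.
have -> : ((l.1 x + l.1 y) +i* (l.2 x + l.2 y) =
           (l.1 x +i* l.2 x) + (l.1 y +i* l.2 y))%C by [].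
by rewrite mulrDr addrACA.
Qed.

Lemma cexp_ilam_rhoD (R : realType) (V : lmodType R) (l : cdual V)
    (rho : {linear V -> R^o}) (x y : V) :
  cexp (ilam_rho l rho (x + y)) =
    cexp (ilam_rho l rho x) * cexp (ilam_rho l rho y).
Proof. by rewrite ilam_rhoD cexpD. Qed.

Section IwasawaProjection.
Local Open Scope group_scope.
Variables (R : realType) (G : groupType) (a : lmodType R).
Variables (K N : G -> Prop) (expA : a -> G).
Variables (kI : G -> G) (HI : G -> a) (nI : G -> G).
Hypothesis iw : iwasawa K N expA kI HI nI.

Lemma expA_inv (x : a) : (expA x)^-1 = expA (- x)%R.
Proof.
have [_ [expAD _] _ _ _] := iw.
apply: (@mulgI _ (expA x)); rewrite divgg -expAD subrr.
by apply: (@mulgI _ (expA 0)); rewrite mulg1 -expAD addr0.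
Qed.

Lemma HI_mulAN (g : G) (h : a) (n : G) :
  N n -> HI (g * expA h * n) = (HI g + h)%R.
Proof.
move=> Nn; have [[_ [_ NM _]] [expAD _] expA_norm dec uniq] := iw.
have [Kk Nn' dg] := dec g.
set n' := expA (- h)%R * nI g * (expA (- h)%R)^-1 * n.
have Nn'' : N n' by apply: NM => //; apply: expA_norm.
suff -> : g * expA h * n = kI g * expA (HI g + h)%R * n'.
  by have [_ -> _] := uniq _ (HI g + h)%R _ Kk Nn''.
by rewrite {1}dg /n' expA_inv opprK expAD !mulgA -expA_inv mulgK.
Qed.

Lemma HI_mul_bracket (gam g : G) :
  HI (gam * g) = (HI g + bracket HI gam (kI (gam * g)))%R.
Proof.
have [_ _ _ dec _] := iw; have [_ Nn dgg] := dec (gam * g).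
have dg : g = gam^-1 * kI (gam * g) * expA (HI (gam * g)) * nI (gam * g).
  by rewrite -!mulgA (mulgA (kI _)) -dgg mulKg.
by rewrite {2}dg HI_mulAN // /bracket addrC addKr.
Qed.

End IwasawaProjection.

Theorem mainTheorem11 (R : realType) (G : groupType) (a : vectType R)
  (K N : G -> Prop) (expA : a -> G) (kI : G -> G) (HI : G -> a) (nI : G -> G)
  (w : G) (rho : {linear a -> R^o}) (l m : cdual a) :
  iwasawa K N expA kI HI nI ->
  in_normalizer_KA K expA w ->
  forall gam g : G,
    d_lm HI w rho l m (gam * g)%g =
      cexp (ilam_rho l rho (bracket HI gam (actB kI (gam * g)%g 1%g))) *
      cexp (ilam_rho m rho (bracket HI gam (actB kI (gam * g)%g w))) *
      d_lm HI w rho l m g.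
Proof.
(* The identity holds for any [w]; [w \in M'] only matters for its meaning. *)
move=> iw _ gam g.
rewrite /d_lm /actB mulg1 (HI_mul_bracket iw gam g) -mulgA.
rewrite (HI_mul_bracket iw gam (g * w)) mulgA !cexp_ilam_rhoD.
by rewrite mulrACA mulrC.
Qed.
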